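(* Let $q\geq4$ be an even integer and let $(X,\{R_i\}_{i=0}^3)$ be a symmetric 3-class association scheme with adjacency matrices $A_0=I,A_1,A_2,A_3$, intersection numbers $p_{ij}^k$, and first eigenmatrix \[ P=\begin{bmatrix}1&\frac{q^2}{2}-q&\frac{q^2}{2}&q-2\\ 1&\frac q2&-\frac q2&-1\\ 1&-\frac q2+1&-\frac q2&q-2\\ 1&-\frac q2&\frac q2&-1\end{bmatrix}. \] Let $W=I+\sum_{i=1}^3w_iA_i$ be a type-II matrix. Then \[ H(W)=\{w_i^{\pm2}\mid i=1,2,3\}\cup\left\{\left(\frac{w_{i_1}w_{i_2}}{w_{i_3}}\right)^{\pm1}\;\middle|\;1\leq i_1,i_2,i_3\leq3,\ p_{i_2,i_3}^{i_1}>0\right\}\cup\left\{\frac{w_{i_1}w_{i_2}}{w_{j_1}w_{j_2}}\;\middle|\;i_1,i_2,j_1,j_2\in\{1,2,3\}\right\}. \]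
   Context: An association scheme $(X,\{R_i\}_{i=0}^d)$ is a partition of $X\times X$ into relations $R_0=\{(x,x)\}$, $R_1,\dots,R_d$ such that for $(x,y)\in R_k$ the number $p_{ij}^k=|\{z:(x,z)\in R_i,(z,y)\in R_j\}|$ depends only on $i,j,k$; symmetric means each $R_i$ is symmetric; $A_i$ is the $(0,1)$-matrix of $R_i$. With primitive idempotents $E_0=\frac1{|X|}J,E_1,E_2,E_3$ of the span of the $A_i$, the first eigenmatrix is defined by $A_j=\sum_iP_{i,j}E_i$ (here $|X|=q^2-1$; the intersection numbers are determined by $P$). A type-II matrix is a square matrix $W$ of order $n$ with nonzero complex entries such that $W(W^{(-)})^\top=nI$, $W^{(-)}$ the entrywise inverse. The Haagerup set of $W$ (indexed by $X$) is \[ H(W)=\left\{\frac{W_{x_1,y_1}W_{x_2,y_2}}{W_{x_1,y_2}W_{x_2,y_1}}\;\middle|\;x_1,x_2,y_1,y_2\in X\right\}. \] *)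

From HB Require Import structures.
From mathcomp Require Import all_boot all_order all_algebra.
From mathcomp Require Import algC.
Set Implicit Arguments. Unset Strict Implicit. Unset Printing Implicit Defensive.
Import Order.TTheory GRing.Theory Num.Theory.
Local Open Scope ring_scope.

(* A 3-class scheme on the point set X = 'I_n is given by rel : X -> X -> 'I_4,
   with (x,y) \in R_i  <->  rel x y = i. *)

Definition is_sym_scheme (n : nat) (rel : 'I_n -> 'I_n -> 'I_4) : Prop :=
  [/\ (forall x y, (rel x y == ord0) = (x == y)),
      (forall x y, rel x y = rel y x),
      (forall i : 'I_4, exists x y, rel x y = i) &
      (forall (i j : 'I_4) x y x' y', rel x y = rel x' y' ->
         #|[set z | (rel x z == i) && (rel z y == j)]| =
         #|[set z | (rel x' z == i) && (rel z y' == j)]|)].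

(* intersection number p_{ij}^k, computed at some pair (x,y) in R_k (0 if R_k empty) *)
Definition inter_num (n : nat) (rel : 'I_n -> 'I_n -> 'I_4) (i j k : 'I_4) : nat :=
  match [pick xy : 'I_n * 'I_n | rel xy.1 xy.2 == k] with
  | Some xy => #|[set z | (rel xy.1 z == i) && (rel z xy.2 == j)]|
  | None => 0%N
  end.

Definition adj (n : nat) (rel : 'I_n -> 'I_n -> 'I_4) (i : 'I_4) : 'M[algC]_n :=
  \matrix_(x, y) (rel x y == i)%:R.

Definition Pmat (q : nat) : 'M[algC]_4 :=
  let Q : algC := q%:R in
  \matrix_(i < 4, j < 4) nth 0 (nth [::]
    ([:: [:: 1; Q ^+ 2 / 2 - Q; Q ^+ 2 / 2; Q - 2];
        [:: 1; Q / 2; - (Q / 2); -1];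
        [:: 1; - (Q / 2) + 1; - (Q / 2); Q - 2];
        [:: 1; - (Q / 2); Q / 2; -1]] : seq (seq algC)) i) j.

Definition has_first_eigenmatrix (n : nat) (rel : 'I_n -> 'I_n -> 'I_4)
    (P : 'M[algC]_4) : Prop :=
  exists E : 'I_4 -> 'M[algC]_n,
    [/\ E ord0 = (n%:R)^-1 *: const_mx 1,
        (forall i j, E i *m E j = if i == j then E i else 0),
        \sum_i E i = 1%:M,
        (forall i, E i != 0) &
        (forall j, adj rel j = \sum_i P i j *: E i)].

Definition Wmat (n : nat) (rel : 'I_n -> 'I_n -> 'I_4) (w : 'I_4 -> algC) : 'M[algC]_n :=
  1%:M + \sum_(i : 'I_4 | i != ord0) w i *: adj rel i.

Definition type_II (n : nat) (W : 'M[algC]_n) : Prop :=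
  (forall x y, W x y != 0) /\ W *m (map_mx GRing.inv W)^T = (n%:R)%:M.

Definition haagerup (n : nat) (W : 'M[algC]_n) (z : algC) : Prop :=
  exists x1 x2 y1 y2, z = W x1 y1 * W x2 y2 / (W x1 y2 * W x2 y1).

From mathcomp Require Import all_boot all_order all_algebra.
From mathcomp Require Import algC.
From mathcomp Require Import ring zify.
Import Order.TTheory GRing.Theory Num.Theory.
Local Open Scope ring_scope.
Set Implicit Arguments. Unset Strict Implicit. Unset Printing Implicit Defensive.

(* A Haagerup ratio W(x1,y1) W(x2,y2) / (W(x1,y2) W(x2,y1)) only depends on
   which of the four points coincide and on the relations between them: it is
   1, a square w_i^{+-2}, a "triangle" ratio (w_{i1} w_{i2} / w_{i3})^{+-1} with
   p_{i2,i3}^{i1} > 0, or a general ratio of four w's.  Conversely, the first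
   three kinds are realised by two or three points.  For the general ratio, read
   off from P that the coefficient of A_2 in A_a A_b is positive unless
   a = b = 3: then any two points x1, x2 in relation R_2 are joined by paths of
   every type (a, b) != (3, 3), which yields the required y1, y2.  The excluded
   case is handled by replacing w_3 / w_3 with w_1 / w_1. *)

Definition o1 : 'I_4 := @Ordinal 4 1 isT.
Definition o2 : 'I_4 := @Ordinal 4 2 isT.
Definition o3 : 'I_4 := @Ordinal 4 3 isT.

Section AdjacencyAlgebra.
Variables (n : nat) (rel : 'I_n -> 'I_n -> 'I_4).

Lemma adj_mul_entry (a b : 'I_4) x y :
  (adj rel a *m adj rel b) x y =
  #|[set z | (rel x z == a) && (rel z y == b)]|%:R.
Proof.
rewrite !mxE -sum1_card natr_sum [RHS]big_mkcond /=; apply: eq_bigr => z _.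
rewrite !mxE in_set.
by case: (rel x z == a); case: (rel z y == b); rewrite ?mulr1 ?mulr0 ?mul0r.
Qed.

Lemma sum_adj_entry (c : 'I_4 -> algC) x y :
  (\sum_k c k *: adj rel k) x y = c (rel x y).
Proof.
rewrite summxE (bigD1 (rel x y)) //= big1 => [|k /negbTE nk].
  by rewrite !mxE eqxx mulr1 addr0.
by rewrite !mxE eq_sym nk mulr0.
Qed.

Lemma adj_mul (P : 'M[algC]_4) (a b : 'I_4) (c : 'I_4 -> algC) :
  has_first_eigenmatrix rel P ->
  (forall i, P i a * P i b = \sum_k c k * P i k) ->
  adj rel a *m adj rel b = \sum_k c k *: adj rel k.
Proof.
move=> [E [_ hEE _ _ hA]] hc.
rewrite !hA mulmx_suml.
under eq_bigr => i _ do rewrite mulmx_sumr.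
have -> : \sum_k c k *: adj rel k = \sum_k \sum_i (c k * P i k) *: E i.
  apply: eq_bigr => k _; rewrite hA scaler_sumr.
  by apply: eq_bigr => i _; rewrite scalerA.
rewrite [RHS]exchange_big /=; apply: eq_bigr => i _.
rewrite (bigD1 i) //= big1 => [|j /negbTE nj].
  by rewrite -scalemxAl -scalemxAr hEE eqxx addr0 scalerA hc scaler_suml.
by rewrite -scalemxAl -scalemxAr hEE eq_sym nj !scaler0.
Qed.

Lemma card_paths_eigen (P : 'M[algC]_4) (a b : 'I_4) (c : 'I_4 -> algC) x y :
  has_first_eigenmatrix rel P ->
  (forall i, P i a * P i b = \sum_k c k * P i k) ->
  #|[set z | (rel x z == a) && (rel z y == b)]|%:R = c (rel x y).
Proof. by move=> hP hc; rewrite -adj_mul_entry (adj_mul hP hc) sum_adj_entry. Qed.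

End AdjacencyAlgebra.

(* [Pmat q] for [q = 2 h], with the halves cleared. *)
Definition Pmat_half (h : algC) : 'M[algC]_4 :=
  \matrix_(i < 4, j < 4) nth 0 (nth [::]
    ([:: [:: 1; 2 * h ^+ 2 - 2 * h; 2 * h ^+ 2; 2 * h - 2];
        [:: 1; h; - h; -1];
        [:: 1; - h + 1; - h; 2 * h - 2];
        [:: 1; - h; h; -1]] : seq (seq algC)) i) j.

(* The coefficients p_{ab}^k of A_a A_b on A_0, ..., A_3, computed from P. *)
Definition prod_coef_seq (h : algC) (a b : nat) : seq algC :=
  match a, b with
  | 1, 1 => [:: 2 * h ^+ 2 - 2 * h; (h - 1) ^+ 2; (h - 1) ^+ 2; (h - 2) * h]
  | 1, 2 | 2, 1 => [:: 0; h * (h - 1); h * (h - 1); h ^+ 2]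
  | 1, 3 | 3, 1 => [:: 0; h - 2; h - 1; 0]
  | 2, 2 => [:: 2 * h ^+ 2; h ^+ 2; h ^+ 2; h ^+ 2]
  | 2, 3 | 3, 2 => [:: 0; h; h - 1; 0]
  | 3, 3 => [:: 2 * h - 2; 0; 0; 2 * h - 3]
  | _, _ => [::]
  end.

Definition prod_coef (h : algC) (a b k : 'I_4) : algC :=
  nth 0 (prod_coef_seq h a b) k.

Lemma Pmat_double (h : nat) : Pmat (h * 2) = Pmat_half h%:R.
Proof.
apply/matrixP => i j; rewrite /Pmat !mxE natrM.
have h2 : (2 : algC) != 0 by rewrite pnatr_eq0.
by case: i => [[|[|[|[|i]]]] Hi] //=; case: j => [[|[|[|[|j]]]] Hj] //=; field.
Qed.

Lemma Pmat_half_mul (h : algC) (a b : 'I_4) : a != ord0 -> b != ord0 ->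
  forall i, Pmat_half h i a * Pmat_half h i b =
            \sum_k prod_coef h a b k * Pmat_half h i k.
Proof.
move=> Ha Hb i; rewrite !big_ord_recr big_ord0 /= /prod_coef !mxE /=.
case: a Ha => [[|[|[|[|a]]]] Ha] //= _; case: b Hb => [[|[|[|[|b]]]] Hb] //= _;
case: i => [[|[|[|[|i]]]] Hi] //=; ring.
Qed.

Lemma prod_coef_rel2_gt0 (h : nat) (a b : 'I_4) : (2 <= h)%N ->
  a != ord0 -> b != ord0 -> ~~ ((a == o3) && (b == o3)) ->
  0 < prod_coef h%:R a b o2.
Proof.
move=> h2 Ha Hb Hab.
have h1 : (h%:R - 1 : algC) = h.-1%:R.
  by rewrite -[in LHS](prednK (ltnW h2)) -natr1 addrK.
have p1 : (0 : algC) < h.-1%:R by rewrite ltr0n; lia.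
have p0 : (0 : algC) < h%:R by rewrite ltr0n; lia.
rewrite /prod_coef.
case: a Ha Hab => [[|[|[|[|a]]]] Ha] //= _; case: b Hb => [[|[|[|[|b]]]] Hb] //= _ _;
by rewrite ?h1 ?exprn_gt0 ?mulr_gt0.
Qed.

Lemma rel2_path (h n : nat) (rel : 'I_n -> 'I_n -> 'I_4) (a b : 'I_4) x y :
  (2 <= h)%N -> has_first_eigenmatrix rel (Pmat (h * 2)) -> rel x y = o2 ->
  a != ord0 -> b != ord0 -> ~~ ((a == o3) && (b == o3)) ->
  exists z, rel x z = a /\ rel z y = b.
Proof.
move=> h2 hP rxy Ha Hb Hab; rewrite Pmat_double in hP.
have := card_paths_eigen x y hP (Pmat_half_mul h%:R Ha Hb); rewrite rxy => hcard.
have : (0 < #|[set z | (rel x z == a) && (rel z y == b)]|)%N.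
  by rewrite -(ltr0n algC) hcard prod_coef_rel2_gt0.
by case/card_gt0P => z; rewrite inE => /andP [/eqP ? /eqP ?]; exists z.
Qed.

Lemma wratio_avoid33 (w : 'I_4 -> algC) (a b : 'I_4) :
  a != ord0 -> b != ord0 -> w o1 != 0 -> w o3 != 0 ->
  exists a' b' : 'I_4, [/\ a' != ord0, b' != ord0,
    ~~ ((a' == o3) && (b' == o3)) & w a / w b = w a' / w b'].
Proof.
move=> Ha Hb w1 w3; case: (boolP ((a == o3) && (b == o3))) => [/andP [/eqP ea /eqP eb]|Hab].
  by exists o1, o1; rewrite ea eb !divff.
by exists a, b.
Qed.

Definition hratio (n : nat) (W : 'M[algC]_n) x1 x2 y1 y2 : algC :=
  W x1 y1 * W x2 y2 / (W x1 y2 * W x2 y1).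

Lemma hratio_swapx n (W : 'M[algC]_n) x1 x2 y1 y2 :
  hratio W x2 x1 y1 y2 = (hratio W x1 x2 y1 y2)^-1.
Proof. by rewrite /hratio invf_div [W x2 y1 * _]mulrC [W x2 y2 * _]mulrC. Qed.

Lemma hratio_swapy n (W : 'M[algC]_n) x1 x2 y1 y2 :
  hratio W x1 x2 y2 y1 = (hratio W x1 x2 y1 y2)^-1.
Proof. by rewrite /hratio invf_div. Qed.

Lemma haagerup_inv n (W : 'M[algC]_n) z : haagerup W z -> haagerup W z^-1.
Proof.
by case=> [x1 [x2 [y1 [y2 ->]]]]; exists x1, x2, y2, y1; rewrite -hratio_swapy.
Qed.

Definition haagerup_spec n (rel : 'I_n -> 'I_n -> 'I_4) (w : 'I_4 -> algC)
    (z : algC) : Prop :=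
  [\/ exists i : 'I_4, i != ord0 /\ (z = w i ^+ 2 \/ z = (w i ^+ 2)^-1),
      exists i1 i2 i3 : 'I_4,
        [/\ i1 != ord0, i2 != ord0, i3 != ord0,
            (0 < inter_num rel i2 i3 i1)%N &
            (z = w i1 * w i2 / w i3 \/ z = (w i1 * w i2 / w i3)^-1)] |
      exists i1 i2 j1 j2 : 'I_4,
        [/\ i1 != ord0, i2 != ord0, j1 != ord0, j2 != ord0 &
            z = w i1 * w i2 / (w j1 * w j2)]].

Section SymmetricScheme.
Variables (n : nat) (rel : 'I_n -> 'I_n -> 'I_4) (w : 'I_4 -> algC).
Hypothesis hS : is_sym_scheme rel.
Hypothesis w_neq0 : forall i, i != ord0 -> w i != 0.

Local Notation W := (Wmat rel w).
Local Notation spec := (haagerup_spec rel w).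

Lemma rel_eq0 x y : (rel x y == ord0) = (x == y).
Proof. by case: hS. Qed.

Lemma relC x y : rel x y = rel y x.
Proof. by case: hS. Qed.

Lemma rel_exists (i : 'I_4) : exists x y, rel x y = i.
Proof. by case: hS. Qed.

Lemma neq_of_rel x y (i : 'I_4) : rel x y = i -> i != ord0 -> x != y.
Proof. by move=> <-; rewrite rel_eq0. Qed.

Lemma Wmat_entry x y : W x y = if x == y then 1 else w (rel x y).
Proof.
rewrite /Wmat !mxE summxE; case: (eqVneq x y) => [<-|nxy].
  rewrite big1 ?addr0 // => i Hi; rewrite !mxE.
  by move: (rel_eq0 x x); rewrite eqxx => /eqP ->; rewrite eq_sym (negbTE Hi) mulr0.
rewrite add0r (bigD1 (rel x y)) ?rel_eq0 //= big1 => [|i /andP [_ Hi]].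
  by rewrite !mxE eqxx mulr1 addr0.
by rewrite !mxE eq_sym (negbTE Hi) mulr0.
Qed.

Lemma Wmat_diag x : W x x = 1.
Proof. by rewrite Wmat_entry eqxx. Qed.

Lemma Wmat_offdiag x y : x != y -> W x y = w (rel x y).
Proof. by rewrite Wmat_entry => /negbTE ->. Qed.

Lemma Wmat_neq0 x y : W x y != 0.
Proof.
rewrite Wmat_entry; case: (eqVneq x y) => [_|nxy]; first exact: oner_neq0.
by apply: w_neq0; rewrite rel_eq0.
Qed.

Lemma inter_num_gt0 u v t :
  (0 < inter_num rel (rel u t) (rel t v) (rel u v))%N.
Proof.
rewrite /inter_num; case: pickP => [xy /eqP Hxy|H0]; last first.
  by have := H0 (u, v); rewrite /= eqxx.
case: hS => _ _ _ hp; rewrite (hp _ _ _ _ u v) //.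
by apply/card_gt0P; exists t; rewrite in_set !eqxx.
Qed.

Lemma inter_num_gt0_witness i j k : (0 < inter_num rel i j k)%N ->
  exists u v t, [/\ rel u v = k, rel u t = i & rel t v = j].
Proof.
rewrite /inter_num; case: pickP => [xy /eqP Hxy|] //.
by case/card_gt0P => t; rewrite in_set => /andP [/eqP ? /eqP ?]; exists xy.1, xy.2, t.
Qed.

Lemma hratio_offdiag x1 x2 y1 y2 :
  x1 != y1 -> x2 != y2 -> x1 != y2 -> x2 != y1 ->
  hratio W x1 x2 y1 y2 =
  w (rel x1 y1) * w (rel x2 y2) / (w (rel x1 y2) * w (rel x2 y1)).
Proof. by move=> *; rewrite /hratio !Wmat_offdiag. Qed.

Lemma spec_inv z : spec z -> spec z^-1.
Proof.
case=> [[i [Hi [->|->]]] | [i1 [i2 [i3 [H1 H2 H3 Hp [->|->]]]]] |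
        [i1 [i2 [j1 [j2 [H1 H2 H3 H4 ->]]]]]].
- by apply: Or31; exists i; split; [|right].
- by apply: Or31; exists i; split; [|left; rewrite invrK].
- by apply: Or32; exists i1, i2, i3; split; [| | | |right].
- by apply: Or32; exists i1, i2, i3; split; [| | | |left; rewrite invrK].
- by apply: Or33; exists j1, j2, i1, i2; split; rewrite // invf_div.
Qed.

Lemma spec_one : spec 1.
Proof.
have w1 : w o1 != 0 by exact: w_neq0.
by apply: Or33; exists o1, o1, o1, o1; split; rewrite // divff // mulf_neq0.
Qed.

Lemma spec_hratio_shared x x2 y2 :
  x != x2 -> x != y2 -> spec (hratio W x x2 x y2).
Proof.
move=> nx2 ny2; rewrite /hratio Wmat_diag mul1r (Wmat_offdiag ny2).
rewrite (Wmat_offdiag (y := x)) 1?eq_sym // (relC x2 x).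
have [<-|n22] := eqVneq x2 y2.
  apply: Or31; exists (rel x x2); split; first by rewrite rel_eq0.
  by right; rewrite Wmat_diag div1r expr2.
apply: Or32; exists (rel x y2), (rel x x2), (rel x2 y2).
split; rewrite ?rel_eq0 ?inter_num_gt0 //.
by right; rewrite (Wmat_offdiag n22) invf_div.
Qed.

Lemma spec_hratio x1 x2 y1 y2 : spec (hratio W x1 x2 y1 y2).
Proof.
have [<-|nx] := eqVneq x1 x2.
  by rewrite /hratio [W x1 y2 * _]mulrC divff ?mulf_neq0 ?Wmat_neq0 //;
    exact: spec_one.
have [<-|ny] := eqVneq y1 y2.
  by rewrite /hratio divff ?mulf_neq0 ?Wmat_neq0 //; exact: spec_one.
have [e|n11] := eqVneq x1 y1; first by subst y1; exact: spec_hratio_shared.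
have [e|n12] := eqVneq x1 y2.
  subst y2; rewrite -[hratio _ _ _ _ _]invrK -hratio_swapy.
  exact/spec_inv/spec_hratio_shared.
have [e|n21] := eqVneq x2 y1.
  subst y1; rewrite -[hratio _ _ _ _ _]invrK -hratio_swapx.
  by apply/spec_inv/spec_hratio_shared; rewrite // eq_sym.
have [e|n22] := eqVneq x2 y2.
  subst y2; have -> : hratio W x1 x2 y1 x2 = hratio W x2 x1 x2 y1.
    by rewrite hratio_swapx hratio_swapy invrK.
  by apply: spec_hratio_shared; rewrite // eq_sym.
apply: Or33; exists (rel x1 y1), (rel x2 y2), (rel x1 y2), (rel x2 y1).
by split; rewrite ?rel_eq0 ?hratio_offdiag.
Qed.

Lemma haagerup_wsq i : i != ord0 -> haagerup W (w i ^+ 2).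
Proof.
move=> Hi; have [x [y rxy]] := rel_exists i; have nxy := neq_of_rel rxy Hi.
exists x, y, y, x; rewrite !Wmat_diag (Wmat_offdiag nxy).
by rewrite (Wmat_offdiag (y := x)) 1?eq_sym // (relC y x) rxy mulr1 divr1 expr2.
Qed.

Lemma haagerup_wtri i1 i2 i3 : i1 != ord0 -> i2 != ord0 -> i3 != ord0 ->
  (0 < inter_num rel i2 i3 i1)%N -> haagerup W (w i1 * w i2 / w i3).
Proof.
move=> H1 H2 H3 /inter_num_gt0_witness [u [v [t [ruv rut rtv]]]].
exists u, t, v, u; rewrite Wmat_diag mul1r (Wmat_offdiag (neq_of_rel ruv H1)).
rewrite (Wmat_offdiag (neq_of_rel rtv H3)).
rewrite (Wmat_offdiag (y := u)) 1?eq_sym ?(neq_of_rel rut H2) //.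
by rewrite (relC t u) ruv rut rtv.
Qed.

Lemma haagerup_of_paths x1 x2 y1 y2 (a1 a2 b1 b2 : 'I_4) :
  a1 != ord0 -> a2 != ord0 -> b1 != ord0 -> b2 != ord0 ->
  rel x1 y1 = a1 -> rel y1 x2 = b2 -> rel x1 y2 = b1 -> rel y2 x2 = a2 ->
  haagerup W (w a1 * w a2 / (w b1 * w b2)).
Proof.
move=> Ha1 Ha2 Hb1 Hb2 r1 r2 r3 r4; rewrite relC in r2; rewrite relC in r4.
exists x1, x2, y1, y2; rewrite -[RHS]/(hratio W x1 x2 y1 y2).
rewrite hratio_offdiag ?r1 ?r2 ?r3 ?r4 //.
all: by apply: neq_of_rel; eassumption.
Qed.

End SymmetricScheme.

Lemma type_II_w_neq0 n (rel : 'I_n -> 'I_n -> 'I_4) (w : 'I_4 -> algC) :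
  is_sym_scheme rel -> type_II (Wmat rel w) -> forall i, i != ord0 -> w i != 0.
Proof.
move=> hS [Wnz _] i Hi; have [x [y rxy]] := rel_exists hS i.
by have := Wnz x y; rewrite (Wmat_offdiag w hS (neq_of_rel hS rxy Hi)) rxy.
Qed.

Lemma haagerup_wquad (h n : nat) (rel : 'I_n -> 'I_n -> 'I_4) (w : 'I_4 -> algC)
    (a1 a2 b1 b2 : 'I_4) :
  (2 <= h)%N -> is_sym_scheme rel -> has_first_eigenmatrix rel (Pmat (h * 2)) ->
  (forall i, i != ord0 -> w i != 0) ->
  a1 != ord0 -> a2 != ord0 -> b1 != ord0 -> b2 != ord0 ->
  haagerup (Wmat rel w) (w a1 * w a2 / (w b1 * w b2)).
Proof.
move=> h2 hS hP wnz Ha1 Ha2 Hb1 Hb2.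
have [a1' [b2' [Ha1' Hb2' c1 e1]]] := wratio_avoid33 Ha1 Hb2 (wnz o1 isT) (wnz o3 isT).
have [a2' [b1' [Ha2' Hb1' c2 e2]]] := wratio_avoid33 Ha2 Hb1 (wnz o1 isT) (wnz o3 isT).
have regroup (u v s t : algC) : u * v / (s * t) = (u / t) * (v / s).
  by rewrite invfM; ring.
have -> : w a1 * w a2 / (w b1 * w b2) = w a1' * w a2' / (w b1' * w b2').
  by rewrite !regroup e1 e2.
rewrite andbC in c2; have [x1 [x2 r12]] := rel_exists hS o2.
have [y1 [r1 r2]] := rel2_path h2 hP r12 Ha1' Hb2' c1.
have [y2 [r3 r4]] := rel2_path h2 hP r12 Hb1' Ha2' c2.
exact: (haagerup_of_paths w hS Ha1' Ha2' Hb1' Hb2' r1 r2 r3 r4).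
Qed.

Theorem lemma5p4 (q : nat) (n : nat) (rel : 'I_n -> 'I_n -> 'I_4) (w : 'I_4 -> algC) :
  (4 <= q)%N -> ~~ odd q ->
  is_sym_scheme rel ->
  has_first_eigenmatrix rel (Pmat q) ->
  type_II (Wmat rel w) ->
  forall z : algC,
    haagerup (Wmat rel w) z <->
    [\/ exists i : 'I_4, i != ord0 /\ (z = w i ^+ 2 \/ z = (w i ^+ 2)^-1),
        exists i1 i2 i3 : 'I_4,
          [/\ i1 != ord0, i2 != ord0, i3 != ord0,
              (0 < inter_num rel i2 i3 i1)%N &
              (z = w i1 * w i2 / w i3 \/ z = (w i1 * w i2 / w i3)^-1)] |
        exists i1 i2 j1 j2 : 'I_4,
          [/\ i1 != ord0, i2 != ord0, j1 != ord0, j2 != ord0 &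
              z = w i1 * w i2 / (w j1 * w j2)]].
Proof.
move=> q4 qe hS hP hW z; have wnz := type_II_w_neq0 hS hW.
have qh : q = (q./2 * 2)%N.
  by rewrite -[LHS]odd_double_half (negbTE qe) add0n -muln2.
have h2 : (2 <= q./2)%N by lia.
rewrite qh in hP.
split => [[x1 [x2 [y1 [y2 ->]]]] | ]; first exact: (spec_hratio hS wnz).
case=> [[i [Hi [->|->]]] | [i1 [i2 [i3 [H1 H2 H3 Hp [->|->]]]]] |
        [i1 [i2 [j1 [j2 [H1 H2 H3 H4 ->]]]]]].
- exact: haagerup_wsq.
- exact/haagerup_inv/haagerup_wsq.
- exact: haagerup_wtri.
- exact/haagerup_inv/haagerup_wtri.
- exact: (haagerup_wquad h2 hS hP wnz).
Qed.
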